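(* Let $T_1,T_2$ be equidistant trees on leaf set $X$ with $|X|=n$, and let $X_0\subseteq X$ be a set of leaves which forms a clade in both $T_1$ and $T_2$, such that the tree topology of this clade is the same in $T_1$ and in $T_2$. Then for any tree $T$ on the tropical line segment from $T_1$ to $T_2$, $X_0$ is also a clade of $T$, with the same tree topology as in $T_1$ and $T_2$.
   Context: Max-plus arithmetic: $a\oplus b=\max\{a,b\}$, $a\odot b=a+b$; vectors in $\mathbb{R}^e$, $e=\binom n2$, with coordinates indexed by pairs of leaves, are considered modulo $\mathbb R\mathbf 1$. An equidistant tree is a rooted phylogenetic tree on leaf set $X$ with nonnegative edge lengths and all root-to-leaf distances equal; its ultrametric $u$ is the vector of pairwise leaf distances, and every ultrametric determines a unique equidistant tree. The tropical line segment between trees with ultrametrics $u,v$ consists of the trees with ultrametrics $a\odot u\oplus b\odot v$, $a,b\in\mathbb R$. A clade of a tree is the set of all leaves descending from some vertex; the clade on $X_0$ is the equidistant tree obtained by restricting the tree to the leaves $X_0$ (its ultrametric is the restriction $(u_{ij})_{i,j\in X_0}$), and its tree topology is the topology of this restricted tree. *)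

From mathcomp Require Import all_boot all_order all_algebra.
Set Implicit Arguments. Unset Strict Implicit. Unset Printing Implicit Defensive.
Import Order.TTheory GRing.Theory Num.Theory.
Local Open Scope ring_scope.

(* Dissimilarity vectors on a finite leaf set X are functions X -> X -> R;
   only the off-diagonal entries (pairs of distinct leaves) are meaningful. *)

Definition is_ultrametric (R : realFieldType) (X : finType) (u : X -> X -> R) : Prop :=
  [/\ forall i, u i i = 0,
      forall i j, u i j = u j i,
      forall i j, 0 <= u i j
    & forall i j k, u i j <= Num.max (u i k) (u j k)].

Definition trop_comb (R : realFieldType) (X : finType) (a b : R)
  (u v : X -> X -> R) : X -> X -> R :=
  fun i j => Num.max (a + u i j) (b + v i j).

(* w represents the same point of R^e / R1 as y (off-diagonal entries
   differ by a common constant). *)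
Definition eq_mod1 (R : realFieldType) (X : finType) (w y : X -> X -> R) : Prop :=
  exists c : R, forall i j, i != j -> w i j = y i j + c.

Definition ball (R : realFieldType) (X : finType) (u : X -> X -> R)
  (S : {set X}) (i : X) (d : R) : {set X} :=
  [set j in S | (j == i) || (u i j <= d)].

(* Y is a clade of the equidistant tree on leaf set S with ultrametric u
   (restricted to S): the vertex at height d/2 above leaf i has as
   descendants exactly the leaves of S within distance d of i. *)
Definition is_clade (R : realFieldType) (X : finType) (u : X -> X -> R)
  (S Y : {set X}) : Prop :=
  exists i, i \in S /\ exists d : R, Y = ball u S i d.

(* Tree topology of the equidistant tree on S determined by u|S, encoded as
   its cluster system (the set of its clades); a rooted phylogenetic tree
   (with zero-length internal edges contracted) is determined up to
   isomorphism by its clades. *)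
Definition tree_topology (R : realFieldType) (X : finType) (u : X -> X -> R)
  (S : {set X}) : {set X} -> Prop :=
  fun Y => is_clade u S Y.

(* A set Y of leaves is a clade of an ultrametric u exactly when every
   distance inside Y is strictly smaller than the distance from a leaf of Y
   to any leaf outside Y.  Equal clade systems on X0 force u1 and u2 to
   order the distances from any leaf of X0 in the same strict way, and a
   tropical combination max (a + u1, b + u2) respects every strict or weak
   inequality satisfied by both u1 and u2.  Hence the separation property of
   X0 in the whole tree, and of every clade inside X0, passes to the
   trees on the tropical segment. *)

From mathcomp Require Import all_boot all_order all_algebra.
From Stdlib Require Import FunctionalExtensionality PropExtensionality.
Import Order.TTheory GRing.Theory Num.Theory.
Set Implicit Arguments.
Unset Strict Implicit.
Unset Printing Implicit Defensive.
Local Open Scope ring_scope.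

Section Clades.

Variables (R : realFieldType) (X : finType).
Implicit Types (u v w : X -> X -> R) (S Y : {set X}).

Definition separated_cluster u S Y : Prop :=
  [/\ Y != set0, Y \subset S &
      {in Y &, forall i j, {in S :\: Y, forall k, i != j -> u i j < u i k}}].

Definition dist_lt_mono u v S : Prop :=
  {in S & &, forall i j k, i != j -> i != k -> u i j < u i k -> v i j < v i k}.

Lemma ultra_lt_le u i x k :
  is_ultrametric u -> u i x < u i k -> u i k <= u x k.
Proof.
case=> _ us _ ut ltxk; have := ut i k x; rewrite le_max (us k x).
by case/orP=> // lekx; move: ltxk; rewrite ltNge lekx.
Qed.

Lemma clade_separated u S Y :
  is_ultrametric u -> is_clade u S Y -> separated_cluster u S Y.
Proof.
move=> U; case: (U) => u0 us up ut [i0 [Si0 [d ->]]]; split.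
- by apply/set0Pn; exists i0; rewrite inE Si0 eqxx.
- by apply/subsetP=> x; rewrite inE => /andP[].
move=> i j; rewrite !inE => /andP[_ Yi] /andP[_ Yj] k.
rewrite !inE negb_and negb_or => /andP[/orP[/negP//|/andP[_ /negbTE nle_kd]] Sk] ij.
have le_d x : (x == i0) || (u i0 x <= d) -> x != i0 -> u i0 x <= d.
  by case/orP=> // /eqP ->; rewrite eqxx.
have d_ge0 : 0 <= d.
  case: (eqVneq i i0) => [ii0 | ii0]; last exact: le_trans (up _ _) (le_d _ Yi ii0).
  by apply: le_trans (up _ _) (le_d _ Yj _); rewrite -ii0 eq_sym.
have {}le_d x : (x == i0) || (u i0 x <= d) -> u i0 x <= d.
  by case/orP=> // /eqP ->; rewrite u0.
have lt_dk : d < u i0 k by rewrite ltNge nle_kd.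
have le_ij : u i j <= d.
  by apply: le_trans (ut i j i0) _; rewrite ge_max (us i) (us j) (le_d _ Yi) (le_d _ Yj).
rewrite (le_lt_trans le_ij) // (lt_le_trans lt_dk) //.
by apply: (ultra_lt_le U); apply: le_lt_trans lt_dk; apply: le_d.
Qed.

Lemma separated_clade u S Y :
  is_ultrametric u -> separated_cluster u S Y -> is_clade u S Y.
Proof.
case=> _ _ up _ [/set0Pn[i Yi] /subsetP YS sep]; exists i; split; first exact: YS.
(* The bottom -1 is below every distance, so this also works when Y = [set i]. *)
exists (\big[Num.max/-1]_(j in Y | j != i) u i j); apply/setP => x; rewrite inE.
have [Yx | nYx] := boolP (x \in Y).
  rewrite YS //=; case: eqP => //= /eqP xi.
  by apply/esym/le_bigmax_cond; rewrite Yx.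
have xi : x != i by apply: contraNneq nYx => ->.
have [Sx | //] := boolP (x \in S); apply/esym/negbTE; rewrite /= (negbTE xi) /= -ltNge.
apply/bigmax_ltP; split=> [|j /andP[Yj ji]].
  exact: lt_le_trans (ltrN10 R) (up _ _).
by apply: sep; rewrite // ?inE ?nYx // eq_sym.
Qed.

Lemma cladeP u S Y :
  is_ultrametric u -> is_clade u S Y <-> separated_cluster u S Y.
Proof. by move=> U; split; [apply: clade_separated | apply: separated_clade]. Qed.

Lemma separated_lt_mono u v S Y :
  dist_lt_mono u v S -> separated_cluster u S Y -> separated_cluster v S Y.
Proof.
move=> uv [Y0 YS sep]; split=> // i j Yi Yj k Yk ij.
have [nYk Sk] : k \notin Y /\ k \in S by move: Yk; rewrite inE => /andP.
have ik : i != k by apply: contraNneq nYk => <-.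
exact: uv (subsetP YS i Yi) (subsetP YS j Yj) Sk ij ik (sep i j Yi Yj k Yk ij).
Qed.

Lemma clade_sub_lt_mono u v S :
  is_ultrametric u -> (forall Y, is_clade v S Y -> is_clade u S Y) ->
  dist_lt_mono v u S.
Proof.
move=> U sub i j k Si Sj Sk ij ik ltv.
have ball_clade : is_clade v S (ball v S i (v i j)) by exists i; split=> //; exists (v i j).
have [_ _ sep] := clade_separated U (sub _ ball_clade).
apply: sep ij; rewrite ?inE ?Si ?Sj ?Sk ?eqxx ?lexx ?orbT //.
by rewrite andbT negb_and negb_or (eq_sym k) ik -ltNge ltv.
Qed.

Section TropicalCombination.

Variables (a b : R) (u1 u2 w : X -> X -> R).
Hypothesis w_comb : eq_mod1 w (trop_comb a b u1 u2).

Lemma trop_comb_lt i j k : i != j -> i != k ->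
  u1 i j < u1 i k -> u2 i j < u2 i k -> w i j < w i k.
Proof.
case: w_comb => c wE ij ik lt1 lt2; rewrite !wE // ltrD2r gt_max !lt_max.
by rewrite !ltrD2l lt1 lt2 orbT.
Qed.

Lemma trop_comb_le i j k : i != j -> i != k ->
  u1 i j <= u1 i k -> u2 i j <= u2 i k -> w i j <= w i k.
Proof.
case: w_comb => c wE ij ik le1 le2; rewrite !wE // lerD2r ge_max !le_max.
by rewrite !lerD2l le1 le2 orbT.
Qed.

Lemma separated_trop_comb S Y :
  separated_cluster u1 S Y -> separated_cluster u2 S Y -> separated_cluster w S Y.
Proof.
move=> [Y0 YS sep1] [_ _ sep2]; split=> // i j Yi Yj k Yk ij.
have ik : i != k by apply: contraTneq Yk => <-; rewrite inE Yi.
by apply: trop_comb_lt; [| | apply: sep1 | apply: sep2].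
Qed.

Lemma lt_mono_trop_comb S : dist_lt_mono u1 u2 S -> dist_lt_mono u1 w S.
Proof.
by move=> m12 i j k Si Sj Sk ij ik lt1; apply: trop_comb_lt => //; apply: m12.
Qed.

Lemma trop_comb_lt_mono S : dist_lt_mono u2 u1 S -> dist_lt_mono w u1 S.
Proof.
move=> m21 i j k Si Sj Sk ij ik; rewrite !ltNge; apply: contra => le1.
apply: trop_comb_le => //; rewrite leNgt; apply: contraL le1.
by move/(m21 i j k Si Sj Sk ij ik); rewrite ltNge.
Qed.

End TropicalCombination.

End Clades.

Theorem theorem5 (R : realFieldType) (X : finType) (u1 u2 : X -> X -> R)
  (X0 : {set X}) :
  is_ultrametric u1 -> is_ultrametric u2 ->
  is_clade u1 [set: X] X0 -> is_clade u2 [set: X] X0 ->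
  tree_topology u1 X0 = tree_topology u2 X0 ->
  forall (a b : R) (w : X -> X -> R),
    is_ultrametric w -> eq_mod1 w (trop_comb a b u1 u2) ->
    is_clade w [set: X] X0 /\
    tree_topology w X0 = tree_topology u1 X0 /\
    tree_topology w X0 = tree_topology u2 X0.
Proof.
move=> U1 U2 C1 C2 top12 a b w W wE.
have clades12 Y : tree_topology u1 X0 Y <-> tree_topology u2 X0 Y by rewrite top12.
have m21 := clade_sub_lt_mono U1 (fun Y => (clades12 Y).2).
have m12 := clade_sub_lt_mono U2 (fun Y => (clades12 Y).1).
have top_w : tree_topology w X0 = tree_topology u1 X0.
  apply: functional_extensionality => Y; apply: propositional_extensionality.
  rewrite /tree_topology !cladeP //; split; apply: separated_lt_mono.
    exact: (trop_comb_lt_mono wE m21).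
  exact: (lt_mono_trop_comb wE m12).
split; first by apply/cladeP => //; apply: (separated_trop_comb wE); apply/cladeP.
by rewrite top_w.
Qed.
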